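(* Let $\Gamma$ be a $\mathbb Z^d$-periodic graph whose fundamental graph $\Gamma_*=(V_*,\mathcal E_* )$ is bipartite with parts $V_1,V_2$ (every edge of $\Gamma_*$ joins a vertex of $V_1$ to a vertex of $V_2$), and suppose $m=\#V_1-\#V_2>0$. Then $\{1\}$ is a degenerate spectral band of the normalized Laplacian $\Delta$ on $\Gamma$, of multiplicity at least $m$ (i.e. for every $\vartheta\in\mathbb T^d$, $1$ is an eigenvalue of $\Delta(\vartheta)$ of multiplicity at least $m$).
   Context: A $\mathbb Z^d$-periodic graph is a connected infinite graph $\Gamma=(V,\mathcal E)$, possibly with loops and multiple edges, on which $\mathbb Z^d$ acts freely by graph automorphisms, with finite vertex degrees and finite quotient graph $\Gamma_*=\Gamma/\mathbb Z^d=(V_*,\mathcal E_* )$. Each undirected edge is regarded as two oppositely oriented edges; $\mathcal A$ is the set of oriented edges, $\mathcal A_*=\mathcal A/\mathbb Z^d$; $\varkappa_v$ is the number of oriented edges starting at $v$. $(\Delta f)(v)=f(v)-\sum_{(v,u)\in\mathcal A}\frac{f(u)}{\sqrt{\varkappa_v\varkappa_u}}$ on $\ell^2(V)$. Fix a subtree of $\Gamma$ whose vertex set $V_0$ consists of $\#V_*$ pairwise non-equivalent vertices; write $v=v_0+[v]$ with $v_0\in V_0$, $[v]\in\mathbb Z^d$; edge index $\tau(u,v)=[v]-[u]$, defined on $\mathcal A_*$. For $\vartheta\in\mathbb T^d=\mathbb R^d/(2\pi\mathbb Z)^d$, $(\Delta(\vartheta)f)(v)=f(v)-\sum_{\mathbf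 e=(v,u)\in\mathcal A_*}\frac{e^{i\langle\tau(\mathbf e),\vartheta\rangle}}{\sqrt{\varkappa_v\varkappa_u}}f(u)$ on $\ell^2(V_* )$; $\Delta$ is unitarily equivalent to the direct integral of $\Delta(\vartheta)$ over $\mathbb T^d$. A degenerate band $\{\lambda_*\}$ of $\Delta$ means $\lambda_*$ is an eigenvalue of $\Delta$ of infinite multiplicity (equivalently an eigenvalue of $\Delta(\vartheta)$ for all $\vartheta$); its multiplicity is the multiplicity of $\lambda_*$ as an eigenvalue of $\Delta(\vartheta)$ for almost every $\vartheta$. *)

From Stdlib Require Import Relations.
From mathcomp Require Import all_boot all_algebra.
From mathcomp Require Import complex.
From mathcomp Require Import reals trigo.
Set Implicit Arguments.
Unset Strict Implicit.
Unset Printing Implicit Defensive.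
Import GRing.Theory Num.Theory.
Local Open Scope ring_scope.
Local Open Scope complex_scope.

(* A Z^d-periodic graph Gamma is encoded by its finite quotient (fundamental)
   graph Gamma_* with vertex set V_* = 'I_n, a finite type A of oriented edges
   of Gamma_* (= A/Z^d), source/target maps, the orientation-reversing
   involution, and the edge index tau : A -> Z^d (Z^d = 'rV[int]_d).
   The periodic graph itself has vertex set 'I_n * Z^d, and each e : A gives
   the oriented edges (src e, a) -> (tgt e, a + tau e), a in Z^d. *)

Definition lift_edge (n d : nat) (A : finType) (src tgt : A -> 'I_n)
    (tau : A -> 'rV[int]_d) : relation ('I_n * 'rV[int]_d) :=
  fun x y => exists e : A, [/\ src e = x.1, tgt e = y.1 & y.2 = x.2 + tau e].

Definition is_periodic_graph (n d : nat) (A : finType) (src tgt : A -> 'I_n)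
    (rev : A -> A) (tau : A -> 'rV[int]_d) : Prop :=
  [/\ forall e, rev (rev e) = e,
      forall e, rev e != e,
      forall e, src (rev e) = tgt e /\ tgt (rev e) = src e,
      forall e, tau (rev e) = - tau e
    & forall x y, clos_refl_trans _ (lift_edge src tgt tau) x y].

Definition kappa (n : nat) (A : finType) (src : A -> 'I_n) (v : 'I_n) : nat :=
  #|[set e | src e == v]|.

Definition expi (R : realType) (x : R) : R[i] := cos x +i* sin x.

Definition pairing (R : realType) (d : nat) (t : 'rV[int]_d) (th : 'rV[R]_d) : R :=
  \sum_(k < d) (t 0 k)%:~R * th 0 k.

Definition Delta_theta (R : realType) (n d : nat) (A : finType)
    (src tgt : A -> 'I_n) (tau : A -> 'rV[int]_d) (th : 'rV[R]_d) : 'M[R[i]]_n :=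
  \matrix_(v, u)
    ((v == u)%:R
     - \sum_(e : A | (src e == v) && (tgt e == u))
         expi (pairing (tau e) th)
         / (Num.sqrt ((kappa src v * kappa src u)%:R : R))%:C).

Definition bipartition (n : nat) (A : finType) (src tgt : A -> 'I_n)
    (V1 V2 : {set 'I_n}) : Prop :=
  [/\ V1 :&: V2 = set0, V1 :|: V2 = setT &
      forall e, (src e \in V1 /\ tgt e \in V2) \/ (src e \in V2 /\ tgt e \in V1)].

From mathcomp Require Import all_boot all_algebra.
From mathcomp Require Import complex.
From mathcomp Require Import reals trigo.
From mathcomp Require Import zify.
Import GRing.Theory Num.Theory.
Local Open Scope ring_scope.

(* Since every edge joins V1 to V2, the matrix X = Delta(theta) - 1
   vanishes on the blocks V1 x V1 and V2 x V2.  With P the coordinate projection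
   onto C^V2 this means X = P X + X P, so rank X <= 2 #V2 and the eigenspace
   ker X has dimension at least n - 2 #V2 = #V1 - #V2. *)

Section OffDiagonalRank.

Variable F : fieldType.

Lemma mxrank_sum_le (I : finType) (P : pred I) m n (G : I -> 'M[F]_(m, n)) :
  (\rank (\sum_(i | P i) G i)%R <= \sum_(i | P i) \rank (G i))%N.
Proof.
elim/big_ind2: _ => // [|A a B b leA leB]; first by rewrite mxrank0.
exact: leq_trans (mxrank_add A B) (leq_add leA leB).
Qed.

Definition indicator_mx {n} (S : {set 'I_n}) : 'M[F]_n :=
  diag_mx (\row_i (i \in S)%:R).

Lemma indicator_mxE {n} (S : {set 'I_n}) :
  indicator_mx S = \sum_(i in S) delta_mx i i.
Proof.
apply/matrixP => v u; rewrite !mxE summxE.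
have [<-|neq_vu] := eqVneq v u; last first.
  rewrite big1 // => k _; rewrite mxE.
  by case: eqVneq => // <-; rewrite eq_sym (negbTE neq_vu).
rewrite mulr1n; case vS: (v \in S); last first.
  rewrite big1 // => k kS; rewrite mxE.
  by case: eqVneq => // eq_vk; rewrite eq_vk kS in vS.
rewrite (bigD1 v) //= mxE !eqxx big1 ?addr0 // => k /andP[_ neq_kv].
by rewrite mxE eq_sym (negbTE neq_kv).
Qed.

Lemma mxrank_indicator_mx {n} (S : {set 'I_n}) :
  (\rank (indicator_mx S) <= #|S|)%N.
Proof.
rewrite indicator_mxE; apply: leq_trans; first exact: mxrank_sum_le.
by rewrite (eq_bigr (fun _ => 1%N)) ?sum1_card // => i _; rewrite mxrank_delta.
Qed.

Lemma mxrank_offdiag_blocks m n (S : {set 'I_m}) (T : {set 'I_n})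
    (M : 'M[F]_(m, n)) :
  (forall i j, (i \in S) = (j \in T) -> M i j = 0) ->
  (\rank M <= #|S| + #|T|)%N.
Proof.
move=> M0.
have -> : M = indicator_mx S *m M + M *m indicator_mx T.
  apply/matrixP => i j; rewrite mul_diag_mx mul_mx_diag !mxE.
  case iS: (i \in S); case jT: (j \in T);
    rewrite ?mul1r ?mulr1 ?mul0r ?mulr0 ?addr0 ?add0r //;
    by rewrite M0 ?iS ?jT ?addr0.
apply: leq_trans (mxrank_add _ _) _; apply: leq_add.
  exact: leq_trans (mxrankM_maxl _ _) (mxrank_indicator_mx S).
exact: leq_trans (mxrankM_maxr _ _) (mxrank_indicator_mx T).
Qed.

End OffDiagonalRank.

Lemma Delta_theta_sub1_no_edge (R : realType) n d (A : finType)
    (src tgt : A -> 'I_n) (tau : A -> 'rV[int]_d) (th : 'rV[R]_d) (v u : 'I_n) :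
  (forall e, src e = v -> tgt e <> u) ->
  (Delta_theta src tgt tau th - 1%:M) v u = 0.
Proof.
move=> no_edge; rewrite !mxE big_pred0 ?subr0 ?subrr // => e.
by apply/negP => /andP[/eqP /no_edge + /eqP].
Qed.

Section Bipartition.

Context {n : nat} {A : finType} {src tgt : A -> 'I_n} {V1 V2 : {set 'I_n}}.
Hypothesis bip : bipartition src tgt V1 V2.

Lemma bipartition_card : (#|V1| + #|V2| = n)%N.
Proof.
case: bip => disj cover _.
by rewrite -cardsUI disj cover cards0 addn0 cardsT card_ord.
Qed.

Lemma bipartition_memN v : (v \in V1) = (v \notin V2).
Proof.
case: bip => disj cover _.
move: disj cover => /setP/(_ v) + /setP/(_ v).
by rewrite !inE; case: (v \in V1); case: (v \in V2).
Qed.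

Lemma bipartition_edge_cross e : (src e \in V2) = (tgt e \notin V2).
Proof.
case: bip => _ _ /(_ e).
by rewrite !bipartition_memN; case: (src e \in V2); case: (tgt e \in V2); case=> -[].
Qed.

End Bipartition.

(* Without #V2 < #V1 the bound is vacuous (truncated
   subtraction). *)
Theorem theorem5p1 (R : realType) (n d : nat) (A : finType)
    (src tgt : A -> 'I_n) (rev : A -> A) (tau : A -> 'rV[int]_d)
    (V1 V2 : {set 'I_n}) :
  is_periodic_graph src tgt rev tau ->
  bipartition src tgt V1 V2 ->
  (#|V2| < #|V1|)%N ->
  forall th : 'rV[R]_d,
    (#|V1| - #|V2| <= \rank (eigenspace (Delta_theta src tgt tau th) 1))%N.
Proof.
move=> _ bip _ th.
rewrite /eigenspace mxrank_ker.
set X := (Delta_theta _ _ _ _ - _)%R.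
have rank_X : (\rank X <= #|V2| + #|V2|)%N.
  apply: mxrank_offdiag_blocks => v u same_side.
  apply: Delta_theta_sub1_no_edge => e src_e tgt_e.
  move: same_side; rewrite -src_e -tgt_e (bipartition_edge_cross bip).
  by case: (tgt e \in V2).
have := bipartition_card bip; clearbody X; lia.
Qed.
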